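(* Let $M$ be a finite rectangular monoid, $k$ a splitting field for $M$, and $X,Y\in\Lambda(M)$ with $X\le Y$. Let $U,V$ be simple $kG_X$-, $kG_Y$-modules, respectively (viewed as simple modules for $kM$, $kM_\ell$ and $kM_r$). Then the number of arrows from $U$ to $V$ in $Q(kM)$ equals the number of arrows from $U$ to $V$ in $Q(kM_\ell)$, and the number of arrows from $V$ to $U$ in $Q(kM)$ equals the number of arrows from $V$ to $U$ in $Q(kM_r)$.
   Context: $M$ finite monoid, $E(M)$ its idempotents, $m^\omega$ the idempotent power of $m$. $M$ is rectangular if each set $\{f\in E(M): MfM=MeM\}$ is closed under multiplication. $\Lambda(M)$: ideals $MeM$, $e\in E(M)$, ordered by inclusion; $\sigma(m)=Mm^\omega M$. Fix $e_X$ with $Me_XM=X$; $G_X$ is the group of units of $e_XMe_X$; a $kG_X$-module is a $kM$-module via $m\mapsto e_Xme_X$ if $\sigma(m)\supseteq X$ and $m\mapsto 0$ otherwise. A two-element right (resp. left) zero subsemigroup is $\{e,f\}$, $e\ne f$, with $ef=f,fe=e$ (resp. $ef=e,fe=f$). $M_\ell$ (resp. $M_r$) is the quotient of $M$ by the smallest congruence identifying the two elements of each two-element right (resp. left) zero subsemigroup; the map $m\mapsto(\sigma(m),\rho_{\sigma(m)}(m))$ to the associated Clifford monoid factors through $M_\ell$ and $M_r$, so $M,M_\ell,M_r$ have the same simple modules (those inflated from the $G_X$). $k$ splits $M$ if $kM/\mathrm{rad}(kM)$ is a product of matrix algebras over $k$. Quiver: $\dim\mathrm{Ext}^1(S,T)$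 arrows $S\to T$. *)

From HB Require Import structures.
From mathcomp Require Import all_boot all_order all_algebra.
Set Implicit Arguments.
Unset Strict Implicit.
Unset Printing Implicit Defensive.
Import GRing.Theory.
Local Open Scope ring_scope.

Section MonoidDefs.
Variables (M : finType) (mul : M -> M -> M) (one : M).

Definition is_monoid : Prop :=
  [/\ associative mul, left_id one mul & right_id one mul].

Definition idem (e : M) : bool := mul e e == e.

Definition mpow (m : M) (n : nat) : M := iter n (mul m) one.

(* m^omega: the idempotent power m^(|M|!) (|M|! is a multiple of the period
   and at least the index of m). *)
Definition omega (m : M) : M := mpow m (#|M|`!).

Definition ideal (e : M) : {set M} := [set mul (mul a e) b | a : M, b : M].

Definition rectangular : Prop :=
  forall e f g, idem e -> idem f -> idem g ->
    ideal f = ideal e -> ideal g = ideal e ->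
    idem (mul f g) /\ ideal (mul f g) = ideal e.

Definition sigma (m : M) : {set M} := ideal (omega m).

Definition corner (e : M) : {set M} := [set mul (mul e m) e | m : M].
Definition GX (e : M) : {set M} :=
  [set g in corner e | [exists h in corner e, (mul g h == e) && (mul h g == e)]].

Variable k : fieldType.

(* a (matrix) representation of the group G_X, X = M e M, on k^n (column
   vectors, left action); only its values on G_X matter *)
Definition is_grep (e : M) n (rho : M -> 'M[k]_n) : Prop :=
  rho e = 1%:M /\ {in GX e &, forall g h, rho (mul g h) = rho g *m rho h}.

(* simplicity of the kG_X-module: nonzero, no proper nonzero invariant
   subspace (subspaces of column space encoded by row spaces of transposes) *)
Definition grep_irr (e : M) n (rho : M -> 'M[k]_n) : Prop :=
  (0 < n)%N /\
  forall U : 'M[k]_n, (forall g, g \in GX e -> (U *m (rho g)^T <= U)%MS) ->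
    (U == (0 : 'M[k]_n))%MS \/ row_full U.

Definition infl (e : M) n (rho : M -> 'M[k]_n) (m : M) : 'M[k]_n :=
  if ideal e \subset sigma m then rho (mul (mul e m) e) else 0.

End MonoidDefs.

Section Reps.
Variables (T : finType) (mul : T -> T -> T) (one : T) (k : fieldType).

Definition is_mrep n (rho : T -> 'M[k]_n) : Prop :=
  rho one = 1%:M /\ forall a b, rho (mul a b) = rho a *m rho b.

Definition mrep_irr n (rho : T -> 'M[k]_n) : Prop :=
  (0 < n)%N /\
  forall U : 'M[k]_n, (forall m, (U *m (rho m)^T <= U)%MS) ->
    (U == (0 : 'M[k]_n))%MS \/ row_full U.

(* k splits the monoid: every simple kM-module S has End_kM(S) = k, i.e.
   (Burnside/Wedderburn) the image of kM in End_k(S) is all of End_k(S);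
   equivalently kM/rad(kM) is a product of matrix algebras over k. *)
Definition splits : Prop :=
  forall n (rho : T -> 'M[k]_n), is_mrep rho -> mrep_irr rho ->
    row_full (\sum_(m : T) <<mxvec (rho m)>>)%MS.

(* dim Ext^1(S,T) = number of arrows S -> T in the quiver, computed as
   derivations modulo inner derivations: an extension 0 -> T -> E -> S -> 0
   is m |-> [[rT m, d m],[0, rS m]] with d(ab) = rT a d b + d a rS b. *)
Section Ext.
Variables (p q : nat) (rS : T -> 'M[k]_q) (rT : T -> 'M[k]_p).

Definition der_defect (d : {ffun T -> 'M[k]_(p, q)}) : {ffun T * T -> 'M[k]_(p, q)} :=
  [ffun x => d (mul x.1 x.2) - (rT x.1 *m d x.2 + d x.1 *m rS x.2)].

Definition inner_der (f : 'M[k]_(p, q)) : {ffun T -> 'M[k]_(p, q)} :=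
  [ffun m => rT m *m f - f *m rS m].

Definition ext1_dim : nat :=
  (\dim (lker (linfun der_defect)) - \dim (limg (linfun inner_der)))%N.
End Ext.
End Reps.

Section Quotient.
Variables (M : finType) (mul : M -> M -> M) (one : M).

Definition is_congr (C : {set M * M}) : bool :=
  [&& [forall x, (x, x) \in C],
      [forall x, forall y, ((x, y) \in C) ==> ((y, x) \in C)],
      [forall x, forall y, forall z, ((x, y) \in C) && ((y, z) \in C) ==> ((x, z) \in C)]
    & [forall x, forall y, forall z, ((x, y) \in C) ==>
          ((mul z x, mul z y) \in C) && ((mul x z, mul y z) \in C)]].

Definition congr_gen (R : {set M * M}) : {set M * M} :=
  \bigcap_(C | is_congr C && (R \subset C)) C.

Definition rz_pairs : {set M * M} :=
  [set x | [&& x.1 != x.2, mul x.1 x.2 == x.2 & mul x.2 x.1 == x.1]].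
Definition lz_pairs : {set M * M} :=
  [set x | [&& x.1 != x.2, mul x.1 x.2 == x.1 & mul x.2 x.1 == x.2]].

Variable C : {set M * M}.
Definition cls (x : M) : {set M} := [set y | (x, y) \in C].
Definition quot := {A : {set M} | A \in [set cls x | x in [set: M]]}.
Definition qmk (x : M) : quot := exist _ (cls x) (imset_f _ (in_setT x)).
Definition qrepr (A : quot) : M := odflt one [pick x in val A].
Definition qmul (A B : quot) : quot := qmk (mul (qrepr A) (qrepr B)).
Definition qone : quot := qmk one.
End Quotient.

Definition Cl M mul := congr_gen mul (@rz_pairs M mul).
Definition Cr M mul := congr_gen mul (@lz_pairs M mul).
Arguments qmul {M} mul one C.
Arguments qrepr {M} one C.
Arguments qmk {M} C x.
Arguments qone {M} one C.

From HB Require Import structures.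
From mathcomp Require Import all_boot all_order all_algebra.
Set Implicit Arguments.
Unset Strict Implicit.
Unset Printing Implicit Defensive.
Import GRing.Theory.

(* For a rectangular monoid the inflation of a [G_X]-module is a representation of
   [M] (sandwiching by [e_X] is multiplicative on the elements [m] with [sigma(m) >= X]),
   and on an idempotent [a] it is the identity if [X <= MaM] and [0] otherwise.
   The two elements of a right zero pair [{a, b}] are J-equivalent idempotents, so [U]
   and [V] agree on them, and the cocycle equations at [ab] and [bb] (or [ba] and [bb])
   force [d a = d b] for every derivation [d] from [U] to [V]: the only bad case,
   [U b = 0] and [V b = 1], is excluded by [X <= Y].  Hence derivations and inner
   derivations are constant on the classes of the congruence defining [M_l], and both
   spaces are identified with those of [M_l]; left zero pairs and [M_r] are dual. *)

Section MonoidTheory.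
Variables (M : finType) (mul : M -> M -> M) (one : M).
Hypothesis Hmon : is_monoid mul one.
Local Notation "x |*| y" := (mul x y) (at level 40, left associativity).
Local Notation "x ^^ n" := (mpow mul one x n) (at level 29, left associativity).

Lemma mulmA : associative mul. Proof. by case: Hmon. Qed.
Lemma mul1m : left_id one mul. Proof. by case: Hmon. Qed.
Lemma mulm1 : right_id one mul. Proof. by case: Hmon. Qed.

Lemma mpowS x n : x ^^ n.+1 = x |*| x ^^ n. Proof. by []. Qed.

Lemma mpow1 x : x ^^ 1 = x. Proof. by rewrite mpowS mulm1. Qed.

Lemma mpowD x m n : x ^^ (m + n) = x ^^ m |*| x ^^ n.
Proof. by elim: m => [|m IH]; rewrite ?mul1m // addSn !mpowS IH mulmA. Qed.

Lemma mpowSr x n : x ^^ n.+1 = x ^^ n |*| x.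
Proof. by rewrite -addn1 mpowD mpow1. Qed.

Lemma mpow_idem e n : e |*| e = e -> e ^^ n.+1 = e.
Proof. by move=> ee; elim: n => [|n IH]; rewrite ?mpow1 // mpowS IH ee. Qed.

Lemma mpow_repeat x : exists i j, [/\ (i < j)%N, (j <= #|M|)%N & x ^^ i = x ^^ j].
Proof.
pose f (i : 'I_#|M|.+1) := x ^^ i.
have /injectivePn[i [j neq_ij fij]] : ~~ injectiveb f.
  by apply/injectiveP => /leq_card; rewrite card_ord ltnn.
have [lt_ij|lt_ji|/val_inj eq_ij] := ltngtP i j; last by rewrite eq_ij eqxx in neq_ij.
- by exists i, j; split; rewrite // -ltnS.
- by exists j, i; split; rewrite // -ltnS.
Qed.

Let N := (#|M|`!)%N.

Lemma N_gt0 : (0 < N)%N. Proof. exact: fact_gt0. Qed.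

(* [N] is a multiple of the period of [x] and at least its index. *)
Lemma omega_idem x : omega mul one x |*| omega mul one x = omega mul one x.
Proof.
have [i [j [lt_ij le_jM eq_ij]]] := mpow_repeat x.
set p := (j - i)%N.
have per m : (i <= m)%N -> x ^^ (m + p) = x ^^ m.
  move=> le_im; rewrite -(subnK le_im) -addnA /p (addnC i) (subnK (ltnW lt_ij)).
  by rewrite mpowD -eq_ij -mpowD.
have perk c m : (i <= m)%N -> x ^^ (m + c * p) = x ^^ m.
  elim: c m => [|c IH] m le_im; first by rewrite mul0n addn0.
  by rewrite mulSn addnA IH ?per // (leq_trans le_im) ?leq_addr.
have p_dvdN : (p %| N)%N by apply: dvdn_fact; rewrite subn_gt0 lt_ij (leq_trans (leq_subr _ _)).
have le_iN : (i <= N)%N.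
  by apply: leq_trans (ltnW (leq_trans lt_ij le_jM)) (fact_geq _).
by rewrite /omega -mpowD -/N -{2}(divnK p_dvdN) perk.
Qed.

Lemma omegaE x : omega mul one x = x |*| x ^^ N.-1.
Proof. by rewrite /omega -/N -mpowS prednK // N_gt0. Qed.

Lemma omegaEr x : omega mul one x = x ^^ N.-1 |*| x.
Proof. by rewrite /omega -/N -mpowSr prednK // N_gt0. Qed.

Lemma omega_id e : e |*| e = e -> omega mul one e = e.
Proof. by move=> ee; rewrite /omega -/N -(prednK N_gt0) mpow_idem. Qed.

Lemma idealP x y : reflect (exists a b, x = a |*| y |*| b) (x \in ideal mul y).
Proof.
apply: (iffP imset2P) => [[a b _ _ ->]|[a [b ->]]]; first by exists a, b.
by exists a b.
Qed.

Lemma mem_ideal a x b : a |*| x |*| b \in ideal mul x.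
Proof. by apply/idealP; exists a, b. Qed.

Lemma ideal_refl x : x \in ideal mul x.
Proof. by apply/idealP; exists one, one; rewrite mul1m mulm1. Qed.

Lemma ideal_trans x y z : x \in ideal mul y -> y \in ideal mul z -> x \in ideal mul z.
Proof.
move=> /idealP[a [b ->]] /idealP[c [d ->]]; apply/idealP.
by exists (a |*| c), (d |*| b); rewrite !mulmA.
Qed.

Lemma mem_ideal_mull x y z : x \in ideal mul y -> z |*| x \in ideal mul y.
Proof. by move=> /idealP[a [b ->]]; apply/idealP; exists (z |*| a), b; rewrite !mulmA. Qed.

Lemma sub_idealE x y : (ideal mul x \subset ideal mul y) = (x \in ideal mul y).
Proof.
apply/subsetP/idP => [-> //|xy z zx]; first exact: ideal_refl.
exact: ideal_trans zx xy.
Qed.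

Lemma eq_idealP x y :
  ideal mul x = ideal mul y <-> x \in ideal mul y /\ y \in ideal mul x.
Proof.
split=> [E|[xy yx]]; first by rewrite -E {2}E !ideal_refl.
by apply/eqP; rewrite eqEsubset !sub_idealE xy yx.
Qed.

Lemma mpow_sandwich u x w n : x = u |*| x |*| w -> x = u ^^ n |*| x |*| w ^^ n.
Proof.
move=> E; elim: n => [|n IH]; first by rewrite mul1m mulm1.
rewrite mpowS mpowSr.
have -> : u |*| u ^^ n |*| x |*| (w ^^ n |*| w) = u |*| (u ^^ n |*| x |*| w ^^ n) |*| w.
  by rewrite !mulmA.
by rewrite -IH.
Qed.

(* Stability of finite monoids: J-equivalence below forces R- (resp. L-) equivalence. *)
Lemma stable_r x y : x \in ideal mul (x |*| y) -> exists z, x = x |*| y |*| z.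
Proof.
move=> /idealP[u [v E]].
have E1 : x = u |*| x |*| (y |*| v) by rewrite {1}E !mulmA.
have E2 := mpow_sandwich N E1.
have xo : x = x |*| omega mul one (y |*| v).
  by rewrite {2}E2 -mulmA omega_idem -E2.
by exists (v |*| (y |*| v) ^^ N.-1); rewrite {1}xo omegaE !mulmA.
Qed.

Lemma stable_l x y : x \in ideal mul (y |*| x) -> exists z, x = z |*| (y |*| x).
Proof.
move=> /idealP[u [v E]].
have E1 : x = (u |*| y) |*| x |*| v by rewrite {1}E !mulmA.
have E2 := mpow_sandwich N E1.
have ox : x = omega mul one (u |*| y) |*| x.
  by rewrite {2}E2 !mulmA omega_idem -E2.
by exists ((u |*| y) ^^ N.-1 |*| u); rewrite {1}ox omegaEr !mulmA.
Qed.

Lemma rz_pair_J a b : a |*| b = b -> b |*| a = a ->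
  [/\ a |*| a = a, b |*| b = b & ideal mul a = ideal mul b].
Proof.
move=> ab ba; split; first by rewrite -{2}ba mulmA ab ba.
  by rewrite -{2}ab mulmA ba ab.
by apply/eq_idealP; split; apply/idealP; [exists one, a | exists one, b];
  rewrite mul1m ?ab ?ba.
Qed.

Lemma lz_pair_J a b : a |*| b = a -> b |*| a = b ->
  [/\ a |*| a = a, b |*| b = b & ideal mul a = ideal mul b].
Proof.
move=> ab ba; split; first by rewrite -{1}ab -mulmA ba ab.
  by rewrite -{1}ba -mulmA ab ba.
by apply/eq_idealP; split; apply/idealP; [exists a, one | exists b, one];
  rewrite mulm1 ?ab ?ba.
Qed.


Hypothesis Hrect : rectangular mul.
Variable e : M.
Hypothesis e_idem : idem mul e.

Lemma mulee : e |*| e = e. Proof. exact/eqP. Qed.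
Lemma mulmee a : a |*| e |*| e = a |*| e. Proof. by rewrite -mulmA mulee. Qed.

Definition Jidem f := f |*| f = f /\ ideal mul f = ideal mul e.

Lemma Jidem_e : Jidem e. Proof. by split; first exact: mulee. Qed.

Lemma Jidem_mul f g : Jidem f -> Jidem g -> Jidem (f |*| g).
Proof.
move=> [ff If] [gg Ig].
by have [/eqP ? ?] := Hrect e_idem (introT eqP ff) (introT eqP gg) If Ig.
Qed.

Lemma Jidem_sandwich f g : Jidem f -> Jidem g -> f |*| g |*| f = f.
Proof.
move=> Jf Jg; have [fgf_idem I_fgf] := Jidem_mul (Jidem_mul Jf Jg) Jf.
have [ff If] := Jf.
have /stable_l[z Ez] : f \in ideal mul (f |*| g |*| f) by rewrite I_fgf -If ideal_refl.
have E1 : f |*| (f |*| g |*| f) = f |*| g |*| f by rewrite !mulmA ff.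
by rewrite -E1 {1}Ez -mulmA fgf_idem -Ez.
Qed.

Lemma Jidem_rect f g h : Jidem f -> Jidem g -> Jidem h -> f |*| g |*| h = f |*| h.
Proof.
move=> Jf Jg Jh.
have -> : f |*| g |*| h = (f |*| h |*| f) |*| g |*| (h |*| f |*| h).
  by rewrite (Jidem_sandwich Jf Jh) (Jidem_sandwich Jh Jf).
move: (Jidem_sandwich (Jidem_mul Jf Jh) (Jidem_mul (Jidem_mul Jf Jg) Jh)).
by rewrite !mulmA.
Qed.

Lemma corner_split x y : e |*| x |*| y |*| e = e -> e |*| x |*| e |*| y |*| e = e.
Proof.
move=> exye; pose F := y |*| e |*| x.
have JF : Jidem F.
  split; first by have := congr1 (fun t => y |*| t |*| x) exye; rewrite /F !mulmA.
  apply/eq_idealP; split; first exact: mem_ideal.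
  by apply/idealP; exists (e |*| x), (y |*| e); rewrite /F !mulmA !exye.
have exF : e |*| x |*| F = e |*| x by rewrite /F !mulmA exye.
have Fye : F |*| y |*| e = y |*| e by have := congr1 (mul y) exye; rewrite /F !mulmA.
clearbody F.
have FeF a : a |*| F |*| e |*| F = a |*| F.
  by have := congr1 (mul a) (Jidem_sandwich JF Jidem_e); rewrite !mulmA.
have -> : e |*| x |*| e |*| y |*| e = (e |*| x |*| F) |*| e |*| (F |*| y |*| e).
  by rewrite exF Fye !mulmA.
by rewrite !mulmA FeF exF exye.
Qed.

Lemma idem_corner g : g |*| g = g -> e \in ideal mul g -> e |*| g |*| e = e.
Proof.
move=> gg /idealP[u [v Euv]].
pose s := e |*| u |*| g; pose t := g |*| v |*| e.
have st : s |*| t = e.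
  have -> : s |*| t = e |*| (u |*| (g |*| g) |*| v) |*| e by rewrite /s /t !mulmA.
  by rewrite gg -Euv !mulee.
have te : t |*| e = t by rewrite /t -mulmA mulee.
have gt : g |*| t = t by rewrite /t !mulmA gg.
have sI : s \in ideal mul e by apply/idealP; exists one, (u |*| g); rewrite mul1m mulmA.
clearbody s t.
pose f := t |*| s.
have Jf : Jidem f.
  split.
    have -> : f |*| f = t |*| (s |*| t) |*| s by rewrite /f !mulmA.
    by rewrite st te.
  apply/eq_idealP; split; first exact: mem_ideal_mull.
  apply/idealP; exists s, t.
  have -> : s |*| f |*| t = (s |*| t) |*| (s |*| t) by rewrite /f !mulmA.
  by rewrite st mulee.
have gf : g |*| f = f by rewrite /f mulmA gt.
have efe := Jidem_sandwich Jidem_e Jf.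
clearbody f.
have JG : Jidem (f |*| e |*| g).
  split.
    have -> : f |*| e |*| g |*| (f |*| e |*| g) = f |*| e |*| (g |*| f) |*| e |*| g.
      by rewrite !mulmA.
    by rewrite gf (Jidem_sandwich Jf Jidem_e).
  apply/eq_idealP; split; first exact: mem_ideal.
  apply/idealP; exists e, (f |*| e).
  have -> : e |*| (f |*| e |*| g) |*| (f |*| e) = e |*| f |*| e |*| (g |*| f) |*| e.
    by rewrite !mulmA.
  by rewrite gf efe efe.
have -> : e |*| g |*| e = e |*| (f |*| e |*| g) |*| e by rewrite !mulmA efe.
exact: Jidem_sandwich Jidem_e JG.
Qed.

Lemma corner_inv_sym a b : a |*| e = a -> e |*| b = b -> b |*| e = b ->
  a |*| b = e -> b |*| a = e.
Proof.
move=> ae eb be ab.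
have ba_idem : b |*| a |*| (b |*| a) = b |*| a by rewrite mulmA -(mulmA b a b) ab be.
have : e \in ideal mul (e |*| (b |*| a)).
  rewrite mulmA eb; apply/idealP; exists a, b.
  have -> : a |*| (b |*| a) |*| b = (a |*| b) |*| (a |*| b) by rewrite !mulmA.
  by rewrite ab mulee.
move/stable_r => [z Ez]; rewrite mulmA eb in Ez.
have bae : b |*| a |*| e = b |*| a by rewrite -mulmA ae.
by rewrite -bae {1}Ez mulmA ba_idem -Ez.
Qed.

Lemma mem_GX g h : e |*| g = g -> g |*| e = g -> e |*| h = h -> h |*| e = h ->
  g |*| h = e -> h |*| g = e -> g \in GX mul e.
Proof.
move=> eg ge eh he gh hg.
have corner x : e |*| x = x -> x |*| e = x -> x \in corner mul e.
  by move=> ex xe; apply/imsetP; exists x; rewrite ?ex ?xe.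
by rewrite inE corner //=; apply/existsP; exists h; rewrite corner //= gh hg !eqxx.
Qed.

Lemma GX_inv g : g \in GX mul e -> exists h,
  [/\ e |*| g = g, g |*| e = g, e |*| h = h, h |*| e = h & g |*| h = e /\ h |*| g = e].
Proof.
have corner x : x \in corner mul e -> e |*| x = x /\ x |*| e = x.
  by move=> /imsetP[m _ ->]; rewrite !mulmA mulee mulmee.
rewrite inE => /andP[/corner[eg ge] /existsP[h /andP[/corner[eh he] /andP[/eqP gh /eqP hg]]]].
by exists h.
Qed.

Definition corner_unit x := e |*| x |*| e \in GX mul e.

Lemma corner_unit_Jidem_r x : corner_unit x -> exists2 F, Jidem F & e |*| x |*| F = e |*| x.
Proof.
move=> /GX_inv[h [_ _ eh he [gh hg]]].
have exh : e |*| x |*| h = e by rewrite -{1}eh mulmA gh.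
exists (h |*| e |*| x); last by rewrite !mulmA exh mulee.
split.
  have -> : h |*| e |*| x |*| (h |*| e |*| x) = h |*| (e |*| x |*| h) |*| e |*| x.
    by rewrite !mulmA.
  by rewrite exh -(mulmA h) mulee.
apply/eq_idealP; split; first exact: mem_ideal.
by apply/idealP; exists one, e; move: hg; rewrite mul1m !mulmA.
Qed.

Lemma corner_unit_Jidem_l y : corner_unit y -> exists2 F, Jidem F & F |*| y |*| e = y |*| e.
Proof.
move=> /GX_inv[h [_ _ eh he [gh hg]]].
have hye : h |*| y |*| e = e by rewrite -{1}he; move: hg; rewrite !mulmA.
exists (y |*| e |*| h); last by rewrite -!mulmA (mulmA h) hye mulee.
split.
  have -> : y |*| e |*| h |*| (y |*| e |*| h) = y |*| e |*| (h |*| y |*| e) |*| h.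
    by rewrite !mulmA.
  by rewrite hye mulmee.
apply/eq_idealP; split; first exact: mem_ideal.
by apply/idealP; exists e, one; move: gh; rewrite mulm1 !mulmA.
Qed.

Lemma corner_unit_mul x y : corner_unit x -> corner_unit y ->
  e |*| (x |*| y) |*| e = (e |*| x |*| e) |*| (e |*| y |*| e) /\ corner_unit (x |*| y).
Proof.
move=> ux uy.
have [F JF exF] := corner_unit_Jidem_r ux.
have [F' JF' F'ye] := corner_unit_Jidem_l uy.
have mid : e |*| x |*| e |*| y |*| e = e |*| x |*| y |*| e.
  have -> : e |*| x |*| e |*| y |*| e = (e |*| x |*| F) |*| e |*| (F' |*| y |*| e).
    by rewrite exF F'ye !mulmA.
  have -> : (e |*| x |*| F) |*| e |*| (F' |*| y |*| e) =
            e |*| x |*| (F |*| e |*| F') |*| y |*| e by rewrite !mulmA.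
  rewrite (Jidem_rect JF Jidem_e JF').
  have -> : e |*| x |*| (F |*| F') |*| y |*| e = (e |*| x |*| F) |*| (F' |*| y |*| e).
    by rewrite !mulmA.
  by rewrite exF F'ye !mulmA.
have E : e |*| (x |*| y) |*| e = e |*| x |*| e |*| (e |*| y |*| e).
  by rewrite !mulmA mulmee mid.
split=> //; rewrite /corner_unit E.
move: ux uy => /GX_inv[hx [_ _ ehx hxe [gx xg]]] /GX_inv[hy [_ _ ehy hye [gy yg]]].
apply: (@mem_GX _ (hy |*| hx)).
- by rewrite !mulmA mulee.
- by rewrite -mulmA mulmee.
- by rewrite mulmA ehy.
- by rewrite -mulmA hxe.
- have -> : e |*| x |*| e |*| (e |*| y |*| e) |*| (hy |*| hx) =
            e |*| x |*| e |*| (e |*| y |*| e |*| hy) |*| hx by rewrite !mulmA.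
  by rewrite gy mulmee gx.
- have -> : hy |*| hx |*| (e |*| x |*| e |*| (e |*| y |*| e)) =
            hy |*| (hx |*| (e |*| x |*| e)) |*| (e |*| y |*| e) by rewrite !mulmA.
  by rewrite xg hye yg.
Qed.


Lemma corner_unit_factors x y : corner_unit (x |*| y) -> corner_unit x /\ corner_unit y.
Proof.
move=> /GX_inv[h [_ _ eh he [gh hg]]]; split.
- have : e |*| x |*| (y |*| e |*| h) |*| e = e.
    by rewrite -mulmA -(mulmA _ h e) he; move: gh; rewrite !mulmA.
  move/corner_split; set b := e |*| (y |*| e |*| h) |*| e => exb.
  have ab : e |*| x |*| e |*| b = e by move: exb; rewrite /b !mulmA mulmee.
  have eb : e |*| b = b by rewrite /b !mulmA mulee.
  have be : b |*| e = b by rewrite /b mulmee.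
  have ba := corner_inv_sym (mulmee _) eb be ab.
  have exe : e |*| (e |*| x |*| e) = e |*| x |*| e by rewrite !mulmA mulee.
  exact: (mem_GX exe (mulmee _) eb be ab ba).
- have : e |*| (h |*| e |*| x) |*| y |*| e = e.
    by rewrite !mulmA eh; move: hg; rewrite !mulmA.
  move/corner_split; set a := e |*| (h |*| e |*| x) |*| e => aye.
  have ab : a |*| (e |*| y |*| e) = e by move: aye; rewrite /a !mulmA mulmee.
  have ae : a |*| e = a by rewrite /a mulmee.
  have ea : e |*| a = a by rewrite /a !mulmA mulee.
  have eye : e |*| (e |*| y |*| e) = e |*| y |*| e by rewrite !mulmA mulee.
  have ba := corner_inv_sym ae eye (mulmee _) ab.
  exact: (mem_GX eye (mulmee _) ea ae ba ab).
Qed.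


Lemma corner_unit_pow x n : corner_unit x -> corner_unit (x ^^ n.+1).
Proof.
move=> ux; elim: n => [|n IH]; first by rewrite mpow1.
by rewrite mpowS; case: (corner_unit_mul ux IH).
Qed.

Lemma sigma_corner_unit x : (ideal mul e \subset sigma mul one x) = corner_unit x.
Proof.
rewrite /sigma sub_idealE; apply/idP/idP => [/(idem_corner (omega_idem x)) eoe|ux].
  have ab : e |*| x |*| (x ^^ N.-1) |*| e = e by move: eoe; rewrite omegaE !mulmA.
  have ba : e |*| (x ^^ N.-1) |*| x |*| e = e by move: eoe; rewrite omegaEr !mulmA.
  have exe : e |*| (e |*| x |*| e) = e |*| x |*| e by rewrite !mulmA mulee.
  have eye : e |*| (e |*| x ^^ N.-1 |*| e) = e |*| x ^^ N.-1 |*| e.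
    by rewrite !mulmA mulee.
  apply: (mem_GX exe (mulmee _) eye (mulmee _)).
    by move: (corner_split ab); rewrite !mulmA mulmee.
  by move: (corner_split ba); rewrite !mulmA mulmee.
have : corner_unit (omega mul one x).
  by rewrite /omega -/N -(prednK N_gt0) corner_unit_pow.
move=> /GX_inv[h [_ _ eh _ [gh _]]].
by apply/idealP; exists e, h; rewrite -{1}gh -!mulmA eh mulmA.
Qed.

Variable k : fieldType.
Local Open Scope ring_scope.

Lemma inflE n (rho : M -> 'M[k]_n) x :
  infl mul one e rho x = if corner_unit x then rho (e |*| x |*| e) else 0.
Proof. by rewrite /infl sigma_corner_unit. Qed.

Lemma infl_mul n (rho : M -> 'M[k]_n) : is_grep mul e rho ->
  forall x y, infl mul one e rho (x |*| y) = infl mul one e rho x *m infl mul one e rho y.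
Proof.
move=> [_ rhoM] x y; rewrite !inflE.
have [uxy|] := boolP (corner_unit (x |*| y)).
  have [ux uy] := corner_unit_factors uxy.
  by have [-> _] := corner_unit_mul ux uy; rewrite ux uy rhoM.
by case ux: (corner_unit x); case uy: (corner_unit y);
  rewrite ?mul0mx ?mulmx0 // => /negP[]; have [] := corner_unit_mul ux uy.
Qed.

Lemma infl_idem n (rho : M -> 'M[k]_n) a : is_grep mul e rho -> a |*| a = a ->
  infl mul one e rho a = if e \in ideal mul a then 1%:M else 0.
Proof.
move=> [rho_e _] aa; rewrite /infl /sigma omega_id // sub_idealE.
by case: ifP => // /(idem_corner aa) ->.
Qed.

End MonoidTheory.

Local Open Scope ring_scope.

Section Derivations.
Variables (k : fieldType) (T : finType) (mul : T -> T -> T) (p q : nat)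
  (rS : T -> 'M[k]_q) (rT : T -> 'M[k]_p).

Lemma der_defect_linear : linear (der_defect mul rS rT).
Proof.
move=> a u v; apply/ffunP => x; rewrite !ffunE !mulmxDr !mulmxDl -!scalemxAl -!scalemxAr.
by rewrite scalerBr scalerDr [RHS]addrACA -opprD [X in _ = _ - X]addrACA.
Qed.
HB.instance Definition _ :=
  GRing.isLinear.Build k _ _ _ (der_defect mul rS rT) der_defect_linear.

Lemma inner_der_linear : linear (inner_der rS rT).
Proof.
move=> a u v; apply/ffunP => x; rewrite !ffunE !mulmxDr !mulmxDl -!scalemxAl -!scalemxAr.
by rewrite scalerBr [RHS]addrACA -opprD.
Qed.
HB.instance Definition _ :=
  GRing.isLinear.Build k _ _ _ (inner_der rS rT) inner_der_linear.

Definition is_der (d : {ffun T -> 'M[k]_(p, q)}) :=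
  forall a b, d (mul a b) = rT a *m d b + d a *m rS b.

Lemma lker_der_defectP d : reflect (is_der d) (d \in lker (linfun (der_defect mul rS rT))).
Proof.
rewrite memv_ker lfunE; apply: (iffP eqP) => [/ffunP D a b|Dd].
  by move/eqP: (D (a, b)); rewrite !ffunE subr_eq0 => /eqP.
by apply/ffunP => x; rewrite !ffunE Dd subrr.
Qed.

Lemma is_der0 : is_der 0.
Proof. by move=> a b; rewrite !ffunE mulmx0 mul0mx addr0. Qed.

Hypothesis mulA : associative mul.
Variable d : {ffun T -> 'M[k]_(p, q)}.
Hypothesis d_der : is_der d.

Lemma der_eq_rz a b : mul a b = b -> mul b a = a ->
  rS a = rS b -> rT a = rT b -> rS b = 1%:M \/ rT b = 0 -> d a = d b.
Proof.
move=> ab ba Sab Tab; have bb : mul b b = b by rewrite -{2}ab mulA ba ab.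
case=> [S1|T0].
- have E1 := d_der a b; have E2 := d_der b b.
  rewrite ab S1 mulmx1 Tab in E1; rewrite bb S1 mulmx1 in E2.
  by apply: (addrI (rT b *m d b)); rewrite -E1 -E2.
- have E1 := d_der b a; have E2 := d_der b b.
  rewrite ba T0 mul0mx add0r Sab in E1; rewrite bb T0 mul0mx add0r in E2.
  by rewrite E1 -E2.
Qed.

Lemma der_eq_lz a b : mul a b = a -> mul b a = b ->
  rS a = rS b -> rT a = rT b -> rT b = 1%:M \/ rS b = 0 -> d a = d b.
Proof.
move=> ab ba Sab Tab; have aa : mul a a = a by rewrite -{1}ab -mulA ba ab.
case=> [T1|S0].
- have E1 := d_der a b; have E2 := d_der a a.
  rewrite ab Tab T1 mul1mx in E1; rewrite aa Tab T1 mul1mx Sab in E2.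
  by apply: (addIr (d a *m rS b)); rewrite -E1 -E2.
- have E1 := d_der b a; have E2 := d_der a a.
  rewrite ba Sab S0 mulmx0 addr0 in E1; rewrite aa Sab S0 mulmx0 addr0 Tab in E2.
  by rewrite E1 -E2.
Qed.

End Derivations.

Section Transport.
Variables (k : fieldType) (T T' : finType) (mul : T -> T -> T) (mul' : T' -> T' -> T')
  (pi : T -> T') (sg : T' -> T) (p q : nat) (rS : T -> 'M[k]_q) (rT : T -> 'M[k]_p).
Hypothesis pi_sg : cancel sg pi.
Hypothesis pi_mul : forall a b, mul' (pi a) (pi b) = pi (mul a b).
Hypothesis rS_sg_pi : forall x, rS (sg (pi x)) = rS x.
Hypothesis rT_sg_pi : forall x, rT (sg (pi x)) = rT x.
Hypothesis der_sg_pi : forall d, is_der mul rS rT d -> forall x, d (sg (pi x)) = d x.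

Definition comp_pi (d : {ffun T' -> 'M[k]_(p, q)}) : {ffun T -> 'M[k]_(p, q)} :=
  [ffun x => d (pi x)].

Lemma comp_pi_linear : linear comp_pi.
Proof. by move=> a u v; apply/ffunP => x; rewrite !ffunE. Qed.
HB.instance Definition _ := GRing.isLinear.Build k _ _ _ comp_pi comp_pi_linear.

Lemma lker_comp_pi : lker (linfun comp_pi) == 0%VS.
Proof.
apply/lker0P => u v; rewrite !lfunE => /ffunP E; apply/ffunP => A.
by move: (E (sg A)); rewrite !ffunE pi_sg.
Qed.

Lemma ext1_dim_transport : ext1_dim mul rS rT = ext1_dim mul' (rS \o sg) (rT \o sg).
Proof.
rewrite /ext1_dim; set Phi := linfun comp_pi.
have dim_Phi (U : {vspace _}) : \dim (Phi @: U)%VS = \dim U.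
  by apply: limg_dim_eq; rewrite (eqP lker_comp_pi) capv0.
have der_Phi : (Phi @: lker (linfun (der_defect mul' (rS \o sg) (rT \o sg))))%VS
               = lker (linfun (der_defect mul rS rT)).
  apply/eqP; rewrite eqEsubv; apply/andP; split; apply/subvP => d.
  - move=> /memv_imgP[d' /lker_der_defectP Dd' ->]; apply/lker_der_defectP => a b.
    by rewrite lfunE !ffunE -pi_mul Dd' /= !rS_sg_pi !rT_sg_pi.
  - move=> /lker_der_defectP Dd; apply/memv_imgP; exists [ffun A => d (sg A)].
      by apply/lker_der_defectP => A B; rewrite !ffunE -{1}(pi_sg A) -{1}(pi_sg B) pi_mul der_sg_pi.
    by apply/ffunP => x; rewrite lfunE !ffunE der_sg_pi.
have inner_Phi : (Phi @: limg (linfun (inner_der (rS \o sg) (rT \o sg))))%VS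
                 = limg (linfun (inner_der rS rT)).
  rewrite -limg_comp; congr (_ @: _)%VS; apply/lfunP => f.
  by rewrite comp_lfunE !lfunE; apply/ffunP => x; rewrite !ffunE /= rS_sg_pi rT_sg_pi.
by rewrite -der_Phi -inner_Phi !dim_Phi.
Qed.

End Transport.

Section Congruence.
Variables (M : finType) (mul : M -> M -> M) (one : M).

Lemma congrP (C : {set M * M}) : reflect
  [/\ forall x, (x, x) \in C,
      forall x y, (x, y) \in C -> (y, x) \in C,
      forall x y z, (x, y) \in C -> (y, z) \in C -> (x, z) \in C &
      forall x y z, (x, y) \in C -> ((mul z x, mul z y) \in C) && ((mul x z, mul y z) \in C)]
  (is_congr mul C).
Proof.
apply: (iffP and4P) => [[/forallP r /forallP s /forallP t /forallP c]|[r s t c]].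
  split=> [//|x y|x y z xy yz|x y z].
  - by move: (s x) => /forallP/(_ y)/implyP.
  - by move: (t x) => /forallP/(_ y)/forallP/(_ z)/implyP; apply; rewrite xy yz.
  - by move: (c x) => /forallP/(_ y)/forallP/(_ z)/implyP.
split; apply/forallP => x //.
- by apply/forallP => y; apply/implyP; exact: s.
- by apply/forallP => y; apply/forallP => z; apply/implyP => /andP[]; exact: t.
- by apply/forallP => y; apply/forallP => z; apply/implyP; exact: c.
Qed.

Lemma congr_gen_min (R C : {set M * M}) :
  is_congr mul C -> R \subset C -> congr_gen mul R \subset C.
Proof. by move=> congrC RC; apply/subsetP => x /bigcapP; apply; rewrite congrC RC. Qed.

Lemma congr_gen_congr (R : {set M * M}) : is_congr mul (congr_gen mul R).
Proof.
have congr_of C : is_congr mul C && (R \subset C) -> is_congr mul C by case/andP.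
apply/congrP; split.
- by move=> x; apply/bigcapP => C /congr_of/congrP[].
- move=> x y /bigcapP xy; apply/bigcapP => C RC.
  by case/congrP: (congr_of C RC) => _ sym _ _; apply/sym/xy.
- move=> x y z /bigcapP xy /bigcapP yz; apply/bigcapP => C RC.
  by case/congrP: (congr_of C RC) => _ _ trans _; apply: trans (xy C RC) (yz C RC).
- move=> x y z /bigcapP xy; apply/andP; split; apply/bigcapP => C RC;
  by case/congrP: (congr_of C RC) => _ _ _ /(_ x y z (xy C RC))/andP[].
Qed.

Variable C : {set M * M}.
Hypothesis congrC : is_congr mul C.

Lemma cls_eq x y : (x, y) \in C -> cls C x = cls C y.
Proof.
case/congrP: congrC => _ sym trans _ xy; apply/setP => z; rewrite !inE.
by apply/idP/idP; [apply: trans (sym _ _ xy) | apply: trans xy].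
Qed.

Lemma qmk_eq x y : (x, y) \in C -> qmk C x = qmk C y.
Proof. by move=> xy; apply: val_inj; exact: cls_eq. Qed.

Lemma qrepr_cls A : exists x, val A = cls C x /\ (x, qrepr one C A) \in C.
Proof.
case: A => S SC /=; have /imsetP[x _ Sx] := SC; exists x; split => //.
rewrite /qrepr /=; case: pickP => [y|/(_ x)]; first by rewrite Sx inE.
by case/congrP: congrC => refl _ _ _; rewrite Sx inE refl.
Qed.

Lemma qreprK : cancel (qrepr one C) (qmk C).
Proof.
move=> A; have [x [Ax xA]] := qrepr_cls A.
by apply: val_inj; rewrite /= Ax (cls_eq xA).
Qed.

Lemma qmkK x : (x, qrepr one C (qmk C x)) \in C.
Proof.
have [y [/= xy yx]] := qrepr_cls (qmk C x).
case/congrP: congrC => refl _ trans _.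
have : y \in cls C x by rewrite xy inE refl.
by rewrite inE => /trans; apply.
Qed.

Lemma qmul_qmk a b : qmul mul one C (qmk C a) (qmk C b) = qmk C (mul a b).
Proof.
case/congrP: congrC => _ sym trans compat.
apply: qmk_eq; apply: sym.
have /andP[_ h1] := compat _ _ b (qmkK a).
have /andP[h2 _] := compat _ _ (qrepr one C (qmk C a)) (qmkK b).
exact: trans h1 h2.
Qed.

End Congruence.

Section DerivationKernel.
Variables (k : fieldType) (T : finType) (mul : T -> T -> T) (one : T) (p q : nat)
  (rS : T -> 'M[k]_q) (rT : T -> 'M[k]_p).
Hypothesis rS_mul : forall a b, rS (mul a b) = rS a *m rS b.
Hypothesis rT_mul : forall a b, rT (mul a b) = rT a *m rT b.

Definition der_kernel (d : {ffun T -> 'M[k]_(p, q)}) : {set T * T} :=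
  [set xy | [&& rS xy.1 == rS xy.2, rT xy.1 == rT xy.2 & d xy.1 == d xy.2]].

Lemma der_kernel_congr d : is_der mul rS rT d -> is_congr mul (der_kernel d).
Proof.
move=> Dd; apply/congrP; split.
- by move=> x; rewrite inE !eqxx.
- by move=> x y; rewrite !inE /= => /and3P[/eqP-> /eqP-> /eqP->]; rewrite !eqxx.
- by move=> x y z; rewrite !inE /= => /and3P[/eqP-> /eqP-> /eqP->].
- move=> x y z; rewrite !inE /= => /and3P[/eqP Sxy /eqP Txy /eqP dxy].
  by rewrite !Dd !rS_mul !rT_mul Sxy Txy dxy !eqxx.
Qed.

Lemma ext1_dim_quot (R : {set T * T}) :
  (forall d, is_der mul rS rT d -> R \subset der_kernel d) ->
  let C := congr_gen mul R in
  ext1_dim mul rS rT = ext1_dim (qmul mul one C) (rS \o qrepr one C) (rT \o qrepr one C).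
Proof.
move=> R_ker C.
have const d : is_der mul rS rT d -> forall x,
    let y := qrepr one C (qmk C x) in [/\ rS y = rS x, rT y = rT x & d y = d x].
  move=> Dd x; have := subsetP (congr_gen_min (der_kernel_congr Dd) (R_ker d Dd)).
  by move/(_ _ (qmkK one (congr_gen_congr mul R) x)); rewrite inE /= => /and3P[/eqP-> /eqP-> /eqP->].
apply: (ext1_dim_transport (pi := qmk C)) => [|a b|x|x|d Dd x].
- move=> A; exact: (qreprK one (congr_gen_congr mul R) A).
- exact: (qmul_qmk one (congr_gen_congr mul R) a b).
- by have [] := const 0 (is_der0 _ _ _) x.
- by have [] := const 0 (is_der0 _ _ _) x.
- by have [] := const d Dd x.
Qed.

End DerivationKernel.

Lemma infl_idem_cases (M : finType) (mul : M -> M -> M) (one : M) (k : fieldType)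
    (eX eY : M) (p q : nat) (rU : M -> 'M[k]_p) (rV : M -> 'M[k]_q) b :
  is_monoid mul one -> rectangular mul -> idem mul eX -> idem mul eY ->
  ideal mul eX \subset ideal mul eY -> is_grep mul eX rU -> is_grep mul eY rV ->
  mul b b = b -> infl mul one eX rU b = 1%:M \/ infl mul one eY rV b = 0.
Proof.
move=> Hmon Hrect HeX HeY XY HU HV bb.
rewrite (infl_idem Hmon Hrect HeX HU bb) (infl_idem Hmon Hrect HeY HV bb).
have eXeY : eX \in ideal mul eY by rewrite -(sub_idealE Hmon).
case: ifP => [|eXb]; [by left | right]; case: ifP => // eYb.
by rewrite (ideal_trans Hmon eXeY eYb) in eXb.
Qed.

Theorem mainTheorem12 (M : finType) (mul : M -> M -> M) (one : M) (k : fieldType)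
  (Hmon : is_monoid mul one) (Hrect : rectangular mul)
  (Hsplit : splits mul one k)
  (eX eY : M) (HeX : idem mul eX) (HeY : idem mul eY)
  (HXY : ideal mul eX \subset ideal mul eY)
  (p q : nat) (rU : M -> 'M[k]_p) (rV : M -> 'M[k]_q)
  (HU : is_grep mul eX rU) (HUirr : grep_irr mul eX rU)
  (HV : is_grep mul eY rV) (HVirr : grep_irr mul eY rV) :
  let U := infl mul one eX rU in
  let V := infl mul one eY rV in
  ext1_dim mul U V
    = ext1_dim (qmul mul one (Cl mul)) (U \o qrepr one (Cl mul))
                                       (V \o qrepr one (Cl mul))
  /\ ext1_dim mul V U
    = ext1_dim (qmul mul one (Cr mul)) (V \o qrepr one (Cr mul))
                                       (U \o qrepr one (Cr mul)).
Proof.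
move=> U V.
have U_mul := infl_mul Hmon Hrect HeX HU; have V_mul := infl_mul Hmon Hrect HeY HV.
have UV_J a b : mul a a = a -> mul b b = b -> ideal mul a = ideal mul b ->
    U a = U b /\ V a = V b.
  move=> aa bb Iab; rewrite /U /V (infl_idem Hmon Hrect HeX HU aa).
  rewrite (infl_idem Hmon Hrect HeX HU bb) (infl_idem Hmon Hrect HeY HV aa).
  by rewrite (infl_idem Hmon Hrect HeY HV bb) Iab.
have UV_idem b : mul b b = b -> U b = 1%:M \/ V b = 0.
  exact: infl_idem_cases Hmon Hrect HeX HeY HXY HU HV.
split; apply: ext1_dim_quot => // d Dd; apply/subsetP => -[a b].
- rewrite !inE /= => /and3P[_ /eqP ab /eqP ba].
  have [aa bb /(UV_J a b aa bb)[Uab Vab]] := rz_pair_J Hmon ab ba.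
  by rewrite Uab Vab (der_eq_rz (mulmA Hmon) Dd ab ba Uab Vab (UV_idem b bb)) !eqxx.
- rewrite !inE /= => /and3P[_ /eqP ab /eqP ba].
  have [aa bb /(UV_J a b aa bb)[Uab Vab]] := lz_pair_J Hmon ab ba.
  by rewrite Uab Vab (der_eq_lz (mulmA Hmon) Dd ab ba Vab Uab (UV_idem b bb)) !eqxx.
Qed.
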